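(* Let $I$ be a general ring. The following are equivalent: (1) $I$ is a quasipolar general ring; (2) for every $a\in I$, the element $(0,a)$ is quasipolar in the ring $E(\mathbb{Z};I)$; (3) there exists a ring $S$ with identity such that $I$ is a unital $(S,S)$-bimodule compatible with the multiplication of $I$ (as below) and $(0,a)$ is quasipolar in $E(S;I)$ for every $a\in I$.
   Context: A general ring is an associative ring not necessarily having an identity. For $p,q\in I$, $p*q=p+q-pq$; $Q(I)=\{q\in I\mid p*q=0=q*p\text{ for some }p\in I\}$; $\mathrm{comm}(a)=\{x\mid xa=ax\}$, $\mathrm{comm}^2(a)=\{x\mid xy=yx\text{ for all }y\in\mathrm{comm}(a)\}$; $QN(I)=\{q\in I\mid qx\in Q(I)\text{ for all }x\in\mathrm{comm}(q)\}$. An element $a\in I$ is quasipolar in $I$ if there is an idempotent $p\in\mathrm{comm}^2(a)$ with $a+p\in Q(I)$ and $a-ap\in QN(I)$; $I$ is quasipolar if all its elements are. For a ring $R$ with identity, $U(R)$ is its unit group, $R^{qnil}=\{a\in R\mid 1+ax\in U(R)\text{ for all }x\in\mathrm{comm}(a)\}$, and $a\in R$ is quasipolar if there is an idempotent $p\in\mathrm{comm}^2(a)$ with $a+p\in U(R)$ and $ap\in R^{qnil}$. If $S$ is a ring with identity and $I$ is a unital $(S,S)$-bimodule such that $(vw)s=v(ws)$, $(vs)w=v(sw)$, $(sv)w=s(vw)$ for all $v,w\in I$, $s\in S$, the ideal-extension (Dorroh extension) $E(S;I)$ is the additive group $S\oplus I$ with multiplication $(s,v)(r,w)=(sr, sw+vr+vw)$;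 it is a ring with identity $(1,0)$. $E(\mathbb{Z};I)$ is the standard unitization of $I$. *)

From HB Require Import structures.
From mathcomp Require Import all_boot all_order all_algebra.
Set Implicit Arguments. Unset Strict Implicit. Unset Printing Implicit Defensive.
Import GRing.Theory.
Local Open Scope ring_scope.

Definition is_general_ring (V : zmodType) (mul : V -> V -> V) : Prop :=
  [/\ associative mul, left_distributive mul +%R & right_distributive mul +%R].

Section GeneralRing.
Variables (V : zmodType) (mul : V -> V -> V).

Definition circ (p q : V) : V := p + q - mul p q.
Definition inQ (q : V) : Prop := exists p, circ p q = 0 /\ circ q p = 0.
Definition in_comm (a x : V) : Prop := mul x a = mul a x.
Definition in_comm2 (a x : V) : Prop :=
  forall y, in_comm a y -> mul x y = mul y x.
Definition inQN (q : V) : Prop := forall x, in_comm q x -> inQ (mul q x).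
Definition idempotent_el (p : V) : Prop := mul p p = p.

Definition gquasipolar (a : V) : Prop :=
  exists p, [/\ idempotent_el p, in_comm2 a p, inQ (a + p) & inQN (a - mul a p)].
Definition gquasipolar_ring : Prop := forall a, gquasipolar a.

Variable one : V.
Definition is_unit (u : V) : Prop := exists v, mul u v = one /\ mul v u = one.
Definition in_qnil (a : V) : Prop := forall x, in_comm a x -> is_unit (one + mul a x).
Definition uquasipolar (a : V) : Prop :=
  exists p, [/\ idempotent_el p, in_comm2 a p, is_unit (a + p) & in_qnil (mul a p)].
End GeneralRing.

Record compat_bimodule (S : pzRingType) (V : zmodType) (mul : V -> V -> V)
    (ls : S -> V -> V) (rs : V -> S -> V) : Prop := CompatBimodule {
  ls_addr : forall s v w, ls s (v + w) = ls s v + ls s w;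
  ls_addl : forall s r v, ls (s + r) v = ls s v + ls r v;
  ls_mul : forall s r v, ls (s * r) v = ls s (ls r v);
  ls_one : forall v, ls 1 v = v;
  rs_addl : forall s v w, rs (v + w) s = rs v s + rs w s;
  rs_addr : forall s r v, rs v (s + r) = rs v s + rs v r;
  rs_mul : forall s r v, rs v (s * r) = rs (rs v s) r;
  rs_one : forall v, rs v 1 = v;
  lrs_assoc : forall s r v, rs (ls s v) r = ls s (rs v r);
  compat1 : forall s v w, rs (mul v w) s = mul v (rs w s);
  compat2 : forall s v w, mul (rs v s) w = mul v (ls s w);
  compat3 : forall s v w, mul (ls s v) w = ls s (mul v w) }.

(* Ideal-extension (Dorroh extension) E(S;I) on the carrier S * V:
   (s,v)(r,w) = (sr, sw + vr + vw), identity (1,0). *)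
Definition dorroh_mul (S : pzRingType) (V : zmodType) (mul : V -> V -> V)
    (ls : S -> V -> V) (rs : V -> S -> V) (x y : S * V) : S * V :=
  (x.1 * y.1, ls x.1 y.2 + rs x.2 y.1 + mul x.2 y.2).
Definition dorroh_one (S : pzRingType) (V : zmodType) : S * V := (1, 0).

Definition zls (V : zmodType) (z : int) (v : V) : V := v *~ z.
Definition zrs (V : zmodType) (v : V) (z : int) : V := v *~ z.

From HB Require Import structures.
From mathcomp Require Import all_boot all_order all_algebra ssrAC.
Set Implicit Arguments. Unset Strict Implicit. Unset Printing Implicit Defensive.
Import GRing.Theory.
Local Open Scope ring_scope.

(* E(S;I) is made into a unital ring and I is embedded in it by
   incl v = (0, v).  Under this embedding v |-> 1 - incl v turns the circle
   operation of I into the multiplication of E(S;I), so q lies in Q(I) iff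
   1 - incl q is a unit, and q lies in QN(I) iff incl q is quasinilpotent
   (for the converse, write (incl q * X)^2 = incl q * W with W in I).
   The spectral idempotents correspond by e |-> 1 - incl e:
   - if incl a is quasipolar in any E(S;I) with idempotent P, then P has first
     coordinate 1, so P = 1 - incl e and e makes a quasipolar in I;
   - if a is quasipolar in I with idempotent e, then 1 - incl e makes incl a
     quasipolar in E(S;I) as soon as every element of E(S;I) is central plus an
     element of I, which holds for the standard unitization E(Z;I).
   Both directions need, in a unital ring, the "sign flip": for an idempotent
   p commuting with a and ap quasinilpotent, a + p is a unit iff a - p is.
   The three statements of the theorem then follow: (1) => (2) and (3) => (1)
   are the two directions above, and (2) => (3) takes S = Z. *)

(* A map between additive groups that preserves sums preserves 0, opposites
   and integer multiples; applied to the multiplication of I and to the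
   scalar actions, which are only assumed to distribute over sums. *)
Section AdditiveMaps.
Variables (M N : zmodType) (f : M -> N).
Hypothesis f_add : forall x y, f (x + y) = f x + f y.

Lemma add_map0 : f 0 = 0.
Proof. by apply: (addrI (f 0)); rewrite -f_add !addr0. Qed.

Lemma add_mapN x : f (- x) = - f x.
Proof. by apply: (addrI (f x)); rewrite -f_add !subrr add_map0. Qed.

Lemma add_mapMz x (z : int) : f (x *~ z) = f x *~ z.
Proof.
have f_natmul n : f (x *+ n) = f x *+ n.
  by elim: n => [|n IH]; rewrite ?mulr0n ?add_map0 // !mulrS f_add IH.
by case: z => n; rewrite ?NegzE ?mulrNz ?add_mapN /= f_natmul.
Qed.
End AdditiveMaps.

Section GeneralRingArith.
Variables (V : zmodType) (mul : V -> V -> V).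
Hypothesis hI : is_general_ring mul.

Lemma gmulA : associative mul. Proof. by case: hI. Qed.
Lemma gmulDl x y z : mul (x + y) z = mul x z + mul y z. Proof. by case: hI. Qed.
Lemma gmulDr x y z : mul x (y + z) = mul x y + mul x z. Proof. by case: hI. Qed.

Lemma gmul0r x : mul 0 x = 0. Proof. exact: @add_map0 _ _ (mul^~ x) (fun a b => gmulDl a b x). Qed.
Lemma gmulr0 x : mul x 0 = 0. Proof. exact: add_map0 (gmulDr x). Qed.
Lemma gmulzr x y (z : int) : mul (x *~ z) y = mul x y *~ z.
Proof. exact: @add_mapMz _ _ (mul^~ y) (fun a b => gmulDl a b y) x z. Qed.
Lemma gmulrz x y (z : int) : mul x (y *~ z) = mul x y *~ z.
Proof. exact: add_mapMz (gmulDr x) y z. Qed.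

Lemma int_compat_bimodule : compat_bimodule mul (@zls V) (@zrs V).
Proof.
rewrite /zls /zrs; constructor=> *;
  by rewrite ?mulrzDl ?mulrzDr ?mulr1z ?gmulrz ?gmulzr // -!mulrzA // mulrC.
Qed.
End GeneralRingArith.

Section UnitalRing.
Variable R : pzRingType.
Local Notation U := (is_unit (@GRing.mul R) 1).
Local Notation qnil := (in_qnil (@GRing.mul R) 1).

Lemma unitN (u : R) : U u -> U (- u).
Proof. by case=> v [uv vu]; exists (- v); rewrite !mulrNN. Qed.

Lemma unitM (u v : R) : U u -> U v -> U (u * v).
Proof.
case=> u' [uu' u'u] [v' [vv' v'v]]; exists (v' * u'); split.
  by rewrite mulrA -(mulrA u) vv' mulr1.
by rewrite mulrA -(mulrA v') u'u mulr1.
Qed.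

Lemma unit_comm_factor (x y : R) : x * y = y * x -> U (x * y) -> U x.
Proof.
move=> xy [w [xyw wxy]]; exists (y * w); split; first by rewrite mulrA.
have yw_wy : y * w = w * y.
  have wyx : w * y * x = 1 by rewrite -mulrA -xy.
  by rewrite -[y * w]mul1r -wyx -!mulrA (mulrA x) xyw mulr1.
by rewrite yw_wy -mulrA -xy.
Qed.

(* 1 - t^2 = (1 + t)(1 - t) with commuting factors. *)
Lemma unit_1add_of_sq (t : R) : U (1 - t * t) -> U (1 + t).
Proof.
have e1 : (1 + t) * (1 - t) = 1 - t * t.
  by rewrite mulrDl mul1r mulrBr mulr1 addrA subrK.
have e2 : (1 - t) * (1 + t) = 1 - t * t.
  by rewrite mulrBl mul1r mulrDr mulr1 opprD addrA addrK.
by rewrite -e1; apply: unit_comm_factor; rewrite e1 e2.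
Qed.

Lemma qnilN (t : R) : qnil t -> qnil (- t).
Proof.
move=> qt x; rewrite /in_comm mulrN mulNr => /oppr_inj tx.
by have := qt (- x); rewrite /in_comm !mulrN !mulNr tx => /(_ erefl).
Qed.

Lemma idem_1subr (x : R) : (1 - x) * (1 - x) = 1 - x <-> x * x = x.
Proof.
rewrite mulrBl mul1r mulrBr mulr1 -addrA; split=> [|->]; last by rewrite subrr subr0.
move=> /addrI; rewrite -[X in _ = X]addr0 => /addrI/eqP.
by rewrite oppr_eq0 subr_eq0 eq_sym => /eqP.
Qed.

Lemma comm_1subr (x y : R) : (1 - x) * y = y * (1 - x) <-> x * y = y * x.
Proof. by rewrite mulrBl mulrBr mul1r mulr1; split=> [/addrI/oppr_inj|->]. Qed.

Lemma idem_rinv_eq1 (p w : R) : p * p = p -> p * w = 1 -> p = 1.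
Proof. by move=> pp pw; rewrite -[p]mulr1 -pw mulrA pp. Qed.

(* For an idempotent p, the element 1 - 2p is an involution. *)
Lemma idem_reflection_unit (p : R) : p * p = p -> U (1 - p *+ 2).
Proof.
move=> pp; exists (1 - p *+ 2).
suff e : (1 - p *+ 2) * (1 - p *+ 2) = 1 by [].
rewrite mulrBr mulr1 mulrBl mul1r mulrnAl mulrnAr pp -mulrnA.
have -> : p *+ (2 * 2) = p *+ 2 + p *+ 2 by rewrite -mulrnDr.
by move: (p *+ 2) => q; rewrite (opprD q q) addrA subrr add0r opprK subrK.
Qed.

Lemma comm_unit_inv (u w x : R) : u * w = 1 -> w * u = 1 ->
  x * u = u * x -> x * w = w * x.
Proof.
move=> uw wu xu.
by rewrite -[x * w]mul1r -wu -mulrA [u * (x * w)]mulrA -xu -mulrA uw mulr1.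
Qed.

(* The sign flip: for an idempotent p commuting with a, if a + p is a unit
   and ap is quasinilpotent then a - p is a unit, because
   a - p = (a + p)(1 - 2p)(1 - 2t) with t = ap(a + p)^-1, and 1 - 2t is a
   unit by quasinilpotence of ap. *)
Lemma unit_sub_of_add (a p : R) : p * p = p -> p * a = a * p ->
  U (a + p) -> qnil (a * p) -> U (a - p).
Proof.
move=> pp pa [w [uw wu]] qap; set u := a + p in uw wu.
have up : u * p = a * p + p by rewrite mulrDl pp.
have ua : a * u = u * a by rewrite /u mulrDr mulrDl pa.
have pu : p * u = u * p by rewrite /u mulrDr mulrDl pa pp.
have wa : a * w = w * a := comm_unit_inv uw wu ua.
have wp : p * w = w * p := comm_unit_inv uw wu pu.
set t := a * p * w.
have pt : p * t = t by rewrite /t !mulrA pa -(mulrA a) pp.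
have ut : u * t = a * p by rewrite /t !mulrA -ua -(mulrA a) -pu mulrA -!mulrA uw mulr1.
have Ut : U (1 - t *+ 2).
  have := qap (- (w *+ 2)); rewrite mulrN mulrnAr.
  apply; rewrite /in_comm mulrN mulNr mulrnAr mulrnAl.
  by rewrite mulrA -wa -mulrA -wp mulrA.
have reflections : (1 - p *+ 2) * (1 - t *+ 2) = 1 - p *+ 2 + t *+ 2.
  rewrite mulrBr mulr1 mulrBl mul1r mulrnAl mulrnAr pt -mulrnA.
  have -> : t *+ (2 * 2) = t *+ 2 + t *+ 2 by rewrite -mulrnDr.
  by rewrite opprB addrK.
have -> : a - p = u * ((1 - p *+ 2) * (1 - t *+ 2)).
  rewrite reflections mulrDr mulrBr mulr1 !mulrnAr up ut /u.
  rewrite mulrnDl [_ *+ 2 + _]addrC; move: (a * p *+ 2) => z.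
  by rewrite mulr2n opprD addrA subrK opprD addrA addrK.
apply: unitM; first by exists w.
by apply: unitM => //; exact: idem_reflection_unit.
Qed.

(* The same sign flip, read backwards (apply it to - a). *)
Lemma unit_add_of_sub (a p : R) : p * p = p -> p * a = a * p ->
  U (p - a) -> qnil (a * p) -> U (a + p).
Proof.
move=> pp pa Upa qap.
have pNa : p * - a = - a * p by rewrite mulrN mulNr pa.
have := unit_sub_of_add pp pNa; rewrite addrC mulNr => /(_ Upa (qnilN qap)).
by move=> /unitN; rewrite opprD !opprK.
Qed.
End UnitalRing.

(* Bundling it lets us equip the carrier
   S * I of E(S;I) with its ring structure once and for all. *)
Record ideal_extension := IdealExtension {
  scalars : pzRingType;
  ideal : zmodType;
  imul : ideal -> ideal -> ideal;
  lact : scalars -> ideal -> ideal;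
  ract : ideal -> scalars -> ideal;
  imul_ring : is_general_ring imul;
  act_compat : compat_bimodule imul lact ract }.

Definition ext (D : ideal_extension) : Type := (scalars D * ideal D)%type.
HB.instance Definition _ (D : ideal_extension) := GRing.Zmodule.on (ext D).

Section ExtensionRing.
Variable D : ideal_extension.
Local Notation S := (scalars D).
Local Notation V := (ideal D).
Local Notation mul := (@imul D).
Local Notation ls := (@lact D).
Local Notation rs := (@ract D).
Let hI := imul_ring D.
Let hB := act_compat D.

Lemma lact0 v : ls 0 v = 0. Proof. exact: @add_map0 _ _ (ls^~ v) (fun s r => ls_addl hB s r v). Qed.
Lemma lactv0 s : ls s 0 = 0. Proof. exact: add_map0 (ls_addr hB s). Qed.
Lemma ract0 s : rs 0 s = 0. Proof. exact: add_map0 (rs_addl hB s). Qed.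
Lemma ractv0 v : rs v 0 = 0. Proof. exact: @add_map0 _ _ (rs v) (fun s r => rs_addr hB s r v). Qed.

Local Notation emul := (dorroh_mul mul ls rs).

(* Both sides of associativity expand, via the compatibility axioms, into the
   same seven terms up to order. *)
Lemma emulA : associative emul.
Proof.
move=> [x1 x2] [y1 y2] [z1 z2]; rewrite /dorroh_mul /=; congr (_, _); first exact: mulrA.
rewrite !(ls_addr hB) !(rs_addl hB) !(gmulDl hI) !(gmulDr hI).
rewrite (ls_mul hB) (lrs_assoc hB) (rs_mul hB) (compat1 hB) (compat3 hB) (compat2 hB) (gmulA hI).
by rewrite !addrA [RHS](ACl (1*2*5*3*6*4*7))%AC.
Qed.

Lemma emulDl : left_distributive emul +%R.
Proof.
move=> [x1 x2] [y1 y2] [z1 z2]; rewrite /dorroh_mul /=; congr (_, _); first exact: mulrDl.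
rewrite (ls_addl hB) (rs_addl hB) (gmulDl hI).
by rewrite !addrA [RHS](ACl (1*4*2*5*3*6))%AC.
Qed.

Lemma emulDr : right_distributive emul +%R.
Proof.
move=> [x1 x2] [y1 y2] [z1 z2]; rewrite /dorroh_mul /=; congr (_, _); first exact: mulrDr.
rewrite (ls_addr hB) (rs_addr hB) (gmulDr hI).
by rewrite !addrA [RHS](ACl (1*4*2*5*3*6))%AC.
Qed.

Lemma emul1 : left_id (dorroh_one S V) emul.
Proof.
by move=> [y1 y2]; rewrite /dorroh_mul /= mul1r (ls_one hB) ract0 (gmul0r hI) !addr0.
Qed.

Lemma emulr1 : right_id (dorroh_one S V) emul.
Proof.
by move=> [y1 y2]; rewrite /dorroh_mul /= mulr1 (rs_one hB) lactv0 (gmulr0 hI) add0r addr0.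
Qed.
End ExtensionRing.

HB.instance Definition _ (D : ideal_extension) :=
  GRing.Zmodule_isPzRing.Build (ext D) (@emulA D) (@emul1 D) (@emulr1 D) (@emulDl D) (@emulDr D).

Section Embedding.
Variable D : ideal_extension.
Local Notation V := (ideal D).
Local Notation mul := (@imul D).
Local Notation R := (ext D).
Local Notation U := (is_unit (@GRing.mul R) 1).

Definition incl (v : V) : R := (0, v).

Lemma incl_inj : injective incl. Proof. by move=> v w [->]. Qed.
Lemma inclD v w : incl (v + w) = incl v + incl w.
Proof. by rewrite /incl; congr pair; rewrite /= addr0. Qed.
Lemma inclN v : incl (- v) = - incl v.
Proof. by rewrite /incl; congr pair; rewrite /= oppr0. Qed.
Lemma inclM v w : incl v * incl w = incl (mul v w).
Proof.
rewrite /incl; congr pair; first exact: mulr0.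
by rewrite /= lact0 ractv0 !add0r.
Qed.

Lemma incl_fst0 (x : R) : x.1 = 0 -> x = incl x.2.
Proof. by case: x => x1 x2 /= ->. Qed.
Lemma incl_fst1 (x : R) : x.1 = 1 -> x = 1 - incl (- x.2).
Proof.
by case: x => x1 x2 /= ->; rewrite /incl; congr pair => /=; rewrite ?subr0 ?sub0r ?opprK.
Qed.

Lemma incl_comm a x : in_comm mul a x <-> in_comm *%R (incl a) (incl x).
Proof. by rewrite /in_comm !inclM; split=> [->|/incl_inj]. Qed.

Lemma incl_circ p q : (1 - incl p) * (1 - incl q) = 1 - incl (circ mul p q).
Proof.
rewrite mulrBl mul1r mulrBr mulr1 inclM /circ !inclD inclN.
by rewrite !opprD !opprK !addrA [1 - incl q - _]addrAC.
Qed.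

Lemma one_sub_incl_eq1 v : 1 - incl v = 1 -> v = 0.
Proof. by move=> /(congr1 snd) /= /eqP; rewrite sub0r oppr_eq0 => /eqP. Qed.

Lemma inQ_unit q : inQ mul q <-> U (1 - incl q).
Proof.
split=> [[p [pq qp]] | [w [qw wq]]].
  by exists (1 - incl p); rewrite !incl_circ pq qp subr0.
have w1 : w.1 = 1 by have := congr1 fst qw; rewrite /= subr0 mul1r.
rewrite (incl_fst1 w1) !incl_circ in qw wq.
by exists (- w.2); split; apply: one_sub_incl_eq1.
Qed.

Lemma idem_incl e : idempotent_el mul e <-> idempotent_el *%R (1 - incl e).
Proof.
rewrite /idempotent_el; split=> [ee | /idem_1subr].
  by apply/idem_1subr; rewrite inclM ee.
by rewrite inclM => /incl_inj.
Qed.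

(* Quasinilpotence of incl q in E(S;I) is the QN property of q in I.  The
   converse uses (q x)^2 = q (q x x), where q x x lies in I. *)
Lemma qnil_inQN q : in_qnil *%R 1 (incl q) -> inQN mul q.
Proof.
move=> qn x /incl_comm qx; apply/inQ_unit.
by rewrite -inclM -mulrN -inclN; apply: qn; rewrite /in_comm inclN mulrN mulNr qx.
Qed.

Lemma inQN_qnil q : inQN mul q -> in_qnil *%R 1 (incl q).
Proof.
move=> qN X qX; apply: unit_1add_of_sq.
set W := incl q * X * X.
have W_incl : W = incl W.2 by apply: incl_fst0; rewrite /= !mul0r.
have qW : in_comm mul q W.2.
  by apply/incl_comm; rewrite /in_comm -W_incl /W -!mulrA qX (mulrA X) qX !mulrA.
have -> : incl q * X * (incl q * X) = incl q * W.
  by rewrite /W -!mulrA (mulrA X) qX !mulrA.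
by rewrite W_incl inclM; apply/inQ_unit/qN.
Qed.
End Embedding.

Section Transfer.
Variable D : ideal_extension.
Local Notation mul := (@imul D).
Local Notation R := (ext D).

Lemma incl_mul_1subr a e : incl a * (1 - incl e) = incl (a - mul a e) :> R.
Proof. by rewrite mulrBr mulr1 inclM -inclN -inclD. Qed.

(* The spectral idempotent P of incl a has first coordinate 1 (since incl a + P
   is a unit), hence P = 1 - incl e with e the spectral idempotent of a in I. *)
Lemma quasipolar_from_ext a : uquasipolar *%R 1 (incl a) -> gquasipolar mul a.
Proof.
move=> [P [PP Pcomm2 UaP qnP]].
have P1 : P.1 = 1.
  have [w [aPw _]] := UaP.
  apply: (idem_rinv_eq1 (congr1 fst PP) (w := w.1)).
  by have := congr1 fst aPw; rewrite /= add0r.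
move: (- P.2) (incl_fst1 P1) => e defP; subst P.
exists e; split.
- exact/idem_incl.
- move=> y /incl_comm ay; apply: incl_inj; rewrite -!inclM.
  exact/comm_1subr/Pcomm2.
- apply/inQ_unit.
  have -> : 1 - incl (a + e) = - (incl a - (1 - incl e)).
    by rewrite opprB inclD opprD addrA addrAC.
  by apply/unitN/unit_sub_of_add => //; apply: Pcomm2.
- by apply: qnil_inQN; rewrite -incl_mul_1subr.
Qed.
End Transfer.

(* Conversely, when every element of E(S;I) is a central element plus an
   element of I (as in the standard unitization E(Z;I)), the spectral
   idempotent e of a in I gives the spectral idempotent 1 - incl e of incl a. *)
Section CentralSplit.
Variable D : ideal_extension.
Local Notation mul := (@imul D).
Local Notation R := (ext D).
Hypothesis central_split :
  forall x : R, exists c v, x = c + incl v /\ forall y : R, c * y = y * c.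

Lemma comm2_incl a e : in_comm2 mul a e -> in_comm2 *%R (incl a) (1 - incl e).
Proof.
move=> ae X; have [c [y [-> cc]]] := central_split X.
rewrite /in_comm mulrDl mulrDr cc => /addrI /incl_comm /ae ey.
by apply/comm_1subr; rewrite mulrDl mulrDr cc !inclM ey.
Qed.

Lemma quasipolar_to_ext a : gquasipolar mul a -> uquasipolar *%R 1 (incl a).
Proof.
move=> [e [ee ae Qae QNae]]; exists (1 - incl e).
have PP : idempotent_el *%R (1 - incl e) by apply/idem_incl.
have Pa : (1 - incl e) * incl a = incl a * (1 - incl e).
  exact: (@comm2_incl a e ae (incl a) erefl).
have qnP : in_qnil *%R 1 (incl a * (1 - incl e)).
  by rewrite incl_mul_1subr; apply: inQN_qnil.
split=> //; first exact: comm2_incl.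
apply: unit_add_of_sub => //.
by rewrite -addrA -opprD -inclD [e + a]addrC; apply/inQ_unit.
Qed.
End CentralSplit.

Definition int_extension (V : zmodType) (mul : V -> V -> V)
  (hI : is_general_ring mul) : ideal_extension :=
  IdealExtension hI (int_compat_bimodule hI).

(* In E(Z;I), (n, v) = (n, 0) + incl v with (n, 0) central. *)
Lemma int_central_split (V : zmodType) (mul : V -> V -> V) (hI : is_general_ring mul) :
  forall x : ext (int_extension hI),
    exists c v, x = c + incl v /\ forall y : ext (int_extension hI), c * y = y * c.
Proof.
move=> [n v]; exists (n, 0), v; split.
  by rewrite /incl; congr pair; rewrite /= ?addr0 ?add0r.
move=> [m w]; rewrite /GRing.mul /= /dorroh_mul /zls /zrs /=; congr pair; first exact: mulrC.
by rewrite mul0rz (gmul0r hI) (gmulr0 hI) !addr0 add0r.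
Qed.

Unset Implicit Arguments.
Set Strict Implicit.

Theorem proposition3p1 (V : zmodType) (mul : V -> V -> V)
  (hI : is_general_ring mul) :
  (gquasipolar_ring mul <->
     (forall a : V, uquasipolar (dorroh_mul mul (@zls V) (@zrs V))
                      (dorroh_one int V) (0, a)))
  /\
  ((forall a : V, uquasipolar (dorroh_mul mul (@zls V) (@zrs V))
                      (dorroh_one int V) (0, a)) <->
     (exists (S : pzRingType) (ls : S -> V -> V) (rs : V -> S -> V),
        compat_bimodule mul ls rs /\
        forall a : V, uquasipolar (dorroh_mul mul ls rs) (dorroh_one S V) (0, a))).
Proof.
have from_ext S ls rs (hB : compat_bimodule mul ls rs) :
    (forall a, uquasipolar (dorroh_mul mul ls rs) (dorroh_one S V) (0, a)) ->
    gquasipolar_ring mul.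
  by move=> qp a; apply: (@quasipolar_from_ext (IdealExtension hI hB)); apply: qp.
have to_int_ext : gquasipolar_ring mul ->
    forall a, uquasipolar (dorroh_mul mul (@zls V) (@zrs V)) (dorroh_one int V) (0, a).
  by move=> qp a; exact (quasipolar_to_ext (@int_central_split V mul hI) (qp a)).
split; split=> [qp | qp]; first exact: to_int_ext.
- exact: from_ext (int_compat_bimodule hI) qp.
- by exists int, (@zls V), (@zrs V); split=> //; apply: int_compat_bimodule.
- by case: qp => S [ls [rs [hB qp]]]; apply/to_int_ext/(from_ext _ _ _ hB).
Qed.
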